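(* Let $\mathsf{A}_e,\mathsf{A}_h\subset GL_2(\mathbb{R})$ be such that (1) $\mathsf{A}_h$ is nonempty, compact, and has a strongly invariant multicone $\mathcal{C}$, (2) $\mathsf{A}_e$ is strongly conformal and $A\mathcal{C}=\mathcal{C}$ for all $A\in\mathsf{A}_e$. Then the semigroup $\mathcal{S}(\mathsf{A}_e\cup\mathsf{A}_h)$ generated by $\mathsf{A}_e\cup\mathsf{A}_h$ is almost multiplicative.
   Context: $\|\cdot\|$ is the operator norm. A semigroup $\mathcal{S}\subset GL_2(\mathbb{R})$ is almost multiplicative if there is $\kappa>0$ with $\|AB\|\ge\kappa\|A\|\|B\|$ for all $A,B\in\mathcal{S}$. A set is strongly conformal if there is a single invertible $M$ with $|\det A|^{-1/2}MAM^{-1}\in O(2)$ for all $A$ in the set. $\mathbb{RP}^1$ is the real projective line; a multicone is a proper subset of $\mathbb{RP}^1$ that is a finite union of closed projective intervals; it is strongly invariant for a set $\mathsf{B}$ if $A\mathcal{C}\subset\mathcal{C}^o$ (interior) for all $A\in\mathsf{B}$. *)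

From HB Require Import structures.
From mathcomp Require Import all_boot all_order all_algebra.
From mathcomp Require Import all_classical all_reals all_analysis.
Set Implicit Arguments. Unset Strict Implicit. Unset Printing Implicit Defensive.
Import Order.TTheory GRing.Theory Num.Theory.
Import numFieldNormedType.Exports.
Local Open Scope classical_set_scope.
Local Open Scope ring_scope.

Section Defs.
Variable R : realType.

Definition eucl (v : 'cV[R]_2) : R := Num.sqrt (v 0 0 ^+ 2 + v 1 0 ^+ 2).

Definition opnorm (A : 'M[R]_2) : R :=
  sup [set eucl (A *m v) | v in [set v : 'cV[R]_2 | eucl v = 1]].

Definition inGL2 (A : 'M[R]_2) : Prop := A \in unitmx.

Inductive gen_semigroup (S : set 'M[R]_2) : 'M[R]_2 -> Prop :=
| gen_base A : S A -> gen_semigroup S A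
| gen_mul A B : gen_semigroup S A -> gen_semigroup S B -> gen_semigroup S (A *m B).

Definition almost_multiplicative (S : set 'M[R]_2) : Prop :=
  exists kappa : R, 0 < kappa /\
    forall A B, S A -> S B -> kappa * opnorm A * opnorm B <= opnorm (A *m B).

Definition orthogonal2 (B : 'M[R]_2) : Prop := B^T *m B = 1%:M.

Definition strongly_conformal (S : set 'M[R]_2) : Prop :=
  exists M : 'M[R]_2, M \in unitmx /\
    forall A, S A ->
      orthogonal2 ((Num.sqrt `|\det A|)^-1 *: (M *m A *m invmx M)).

(* Subsets of RP^1 are represented by their cones in R^2 \ {0}: a set of
   nonzero vectors, stable under nonzero scalings. *)
Definition dir (t : R) : 'cV[R]_2 :=
  \col_i (if i == 0 then cos t else sin t).

(* the closed projective interval of directions with angle in [a, b],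
   with a <= b < a + pi (so it is a proper closed arc of RP^1) *)
Definition proj_interval (a b : R) : set 'cV[R]_2 :=
  [set v | exists t s, a <= t <= b /\ s != 0 /\ v = s *: dir t].

Definition is_closed_proj_interval (I : set 'cV[R]_2) : Prop :=
  exists a b, a <= b /\ b < a + pi /\ I = proj_interval a b.

Definition RP1 : set 'cV[R]_2 := [set v | v != 0].

Definition multicone (C : set 'cV[R]_2) : Prop :=
  (exists Is : seq (set 'cV[R]_2),
      (forall I, I \in Is -> is_closed_proj_interval I) /\
      C = \bigcup_(I in [set I | I \in Is]) I) /\
  C !=set0 /\ C <> RP1.

Definition image_mx (A : 'M[R]_2) (C : set 'cV[R]_2) : set 'cV[R]_2 :=
  [set A *m v | v in C].

(* interior in RP^1 of the set of directions C, read on cones (the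
   projection R^2\{0} -> RP^1 is open, so this is the preimage of the
   interior in RP^1) *)
Definition strongly_invariant (C : set 'cV[R]_2) (S : set 'M[R]_2) : Prop :=
  forall A, S A -> image_mx A C `<=` interior C.

End Defs.

From HB Require Import structures.
From mathcomp Require Import all_boot all_order all_algebra.
From mathcomp Require Import all_classical all_reals all_analysis.
From mathcomp Require Import ring lra.
Set Implicit Arguments.
Unset Strict Implicit.
Unset Printing Implicit Defensive.
Import Order.TTheory GRing.Theory Num.Theory.
Import numFieldNormedType.Exports.
Local Open Scope classical_set_scope.
Local Open Scope ring_scope.

(* For [X] in the semigroup and [v] in the multicone [C] we show that [v] is
   uniformly norming for [X]: [|X v| >= sqrt d * ||X|| * |v|] with [d > 0]
   independent of [X] and [v].  Since the semigroup maps [C] into itself, a unit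
   vector [v] of [C] then gives [||X Y|| >= |X Y v| >= d * ||X|| * ||Y||].
   Every element of the semigroup factors as [X = P H E] with [E] a product of
   conformal matrices, [H] in [A_h] and [P] in the semigroup or the identity.
   Products of matrices conformal in a common basis [M] distort lengths by at most
   a constant depending on [M]; compactness of [A_h] bounds norms and determinants
   of [H]; finally [H] maps [C] into its interior with a uniform margin, so [H E v]
   lies deep inside [C], and a vector deep inside [C] cannot be contracted much by
   a matrix [P] mapping [C] into itself, because [C] avoids a whole cone of
   directions. *)

Lemma filter_forall_seq {T : Type} {I : eqType} (F : set_system T) (s : seq I)
    (P : I -> T -> Prop) : Filter F ->
  (forall i, i \in s -> \forall x \near F, P i x) ->
  \forall x \near F, forall i, i \in s -> P i x.
Proof.
move=> FF; elim: s => [|j s IHs] h; first by apply: filterE => x i; rewrite in_nil.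
have hs : \forall x \near F, forall i, i \in s -> P i x.
  by apply: IHs => i hi; apply: h; rewrite in_cons hi orbT.
apply: filterS (filterI (h j (mem_head j s)) hs) => x [hj {}hs] i.
by rewrite in_cons => /orP [/eqP ->|/hs].
Qed.

Lemma continuous_mx_entries {T : topologicalType} {K : numFieldType} m n
    (f : T -> 'M[K]_(m, n)) :
  (forall i j, continuous (fun x => f x i j)) -> continuous f.
Proof.
move=> fc x; apply/cvg_ballP => e e0.
have : \forall y \near x, forall ij : 'I_m * 'I_n, ball (f x ij.1 ij.2) e (f y ij.1 ij.2).
  by apply: filter_forall => -[i j]; exact: (cvg_ballP _ _).1 (fc i j x) e e0.
by apply: filterS => y hy; split => // i j; exact: hy (i, j).
Qed.

Lemma compact_ball_margin {K : realType} {T : pseudoMetricType K} (A C : set T) :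
  compact A -> A `<=` interior C ->
  \forall e \near 0^'+, forall y, A y -> ball y e `<=` C.
Proof.
move=> /compact_near_coveringP cA AC.
apply: (cA _ _ (fun e y => ball y e `<=` C)) => x /AC /nbhs_ballP [e e0 he].
have e2 : 0 < e / 2 by rewrite divr_gt0.
exists (ball x (e / 2), [set r | r < e / 2]).
  by split; [exact: nbhsx_ballx | exact: nbhs_right_lt].
move=> [x' r] /= [xx' re] y x'y; apply: he; rewrite [e]splitr.
by apply: ball_triangle xx' (le_ball (ltW re) x'y).
Qed.

Lemma near0_pos_le1 {K : realFieldType} (P : K -> Prop) :
  (\forall r \near 0^'+, P r) -> exists2 r, 0 < r <= 1 & P r.
Proof.
move=> hP; near (0 : K)^'+ => r; exists r; last by near: r.
apply/andP; split; near: r; [exact: nbhs_right_gt | exact: nbhs_right_le ltr01].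
Unshelve. all: by end_near. Qed.

Section Plane.
Variable R : realType.
Local Notation V := 'cV[R]_2.
Local Notation M2 := 'M[R]_2.
Implicit Types (c d e s t mu rho eta Phi : R) (a b k u v w x y z p : V).
Implicit Types (A B E H M N P X Y : M2).

Lemma ord2P (i : 'I_2) : i = 0 \/ i = 1.
Proof. by case: i => [[|[|//]]] Hi; [left|right]; apply: val_inj. Qed.

Lemma sum_ord2 (F : 'I_2 -> R) : \sum_(i < 2) F i = F 0 + F 1.
Proof. by rewrite big_ord_recl big_ord1; congr (_ + F _); apply: val_inj. Qed.

Lemma det_mx2 (A : M2) : \det A = A 0 0 * A 1 1 - A 0 1 * A 1 0.
Proof.
rewrite (expand_det_row _ 0) sum_ord2 /cofactor !(expand_det_row _ 0) !big_ord1.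
rewrite /cofactor !det_mx00 !mxE /=.
have -> : lift 0 (0 : 'I_1) = 1 :> 'I_2 by apply: val_inj.
have -> : lift 1 (0 : 'I_1) = 0 :> 'I_2 by apply: val_inj.
by rewrite expr0 expr1; ring.
Qed.

Lemma mulmx2E A v i : (A *m v) i 0 = A i 0 * v 0 0 + A i 1 * v 1 0.
Proof. by rewrite mxE sum_ord2. Qed.

Lemma col2P x y : x 0 0 = y 0 0 -> x 1 0 = y 1 0 -> x = y.
Proof.
move=> h0 h1; apply/matrixP => i j; rewrite [j]ord1.
by case: (ord2P i) => ->.
Qed.

Definition sqnorm (v : V) : R := v 0 0 ^+ 2 + v 1 0 ^+ 2.
Definition cross (a b : V) : R := a 0 0 * b 1 0 - a 1 0 * b 0 0.
Definition dot (a b : V) : R := a 0 0 * b 0 0 + a 1 0 * b 1 0.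
Definition frob2 (A : M2) : R := A 0 0 ^+ 2 + A 0 1 ^+ 2 + A 1 0 ^+ 2 + A 1 1 ^+ 2.

Lemma sqnorm_ge0 v : 0 <= sqnorm v.
Proof. by rewrite addr_ge0 // sqr_ge0. Qed.

Lemma frob2_ge0 A : 0 <= frob2 A.
Proof. by rewrite !addr_ge0 // sqr_ge0. Qed.

Lemma sqnorm_eq0 v : (sqnorm v == 0) = (v == 0).
Proof.
apply/eqP/eqP => [h|->]; last by rewrite /sqnorm !mxE expr0n addr0.
have := sqr_ge0 (v 0 0); have := sqr_ge0 (v 1 0); rewrite /sqnorm in h => g1 g0.
by apply: col2P; rewrite !mxE; apply/eqP; rewrite -sqrf_eq0; apply/eqP; lra.
Qed.

Lemma sqnorm0 : sqnorm 0 = 0.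
Proof. by apply/eqP; rewrite sqnorm_eq0. Qed.

Lemma sqnorm_gt0 v : (0 < sqnorm v) = (v != 0).
Proof. by rewrite lt_neqAle sqnorm_ge0 andbT eq_sym sqnorm_eq0. Qed.

Lemma sqnormZ (r : R) v : sqnorm (r *: v) = r ^+ 2 * sqnorm v.
Proof. by rewrite /sqnorm !mxE; ring. Qed.

Lemma sqnorm_dir t : sqnorm (dir t) = 1.
Proof. by rewrite /sqnorm !mxE cos2Dsin2. Qed.

Lemma sqnorm_mul_cross_dot a b : sqnorm a * sqnorm b = cross a b ^+ 2 + dot a b ^+ 2.
Proof. by rewrite /sqnorm /cross /dot; ring. Qed.

Lemma cross_sqr_le a b : cross a b ^+ 2 <= sqnorm a * sqnorm b.
Proof. by rewrite sqnorm_mul_cross_dot lerDl sqr_ge0. Qed.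

Lemma sqnorm_mulmx_le A v : sqnorm (A *m v) <= frob2 A * sqnorm v.
Proof.
rewrite /sqnorm /frob2 !mulmx2E.
set a := A 0 0; set b := A 0 1; set c := A 1 0; set d := A 1 1.
set x := v 0 0; set y := v 1 0.
have -> : (a ^+ 2 + b ^+ 2 + c ^+ 2 + d ^+ 2) * (x ^+ 2 + y ^+ 2) =
  (a * x + b * y) ^+ 2 + (c * x + d * y) ^+ 2 + ((a * y - b * x) ^+ 2 + (c * y - d * x) ^+ 2)
  by ring.
by rewrite lerDl addr_ge0 // sqr_ge0.
Qed.

(* Cramer's rule: [det A * v = adj A * (A v)], and [|adj A|_F = |A|_F]. *)
Lemma sqnorm_mulmx_ge A v : \det A ^+ 2 * sqnorm v <= frob2 A * sqnorm (A *m v).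
Proof.
rewrite det_mx2 /sqnorm /frob2 !mulmx2E.
set a := A 0 0; set b := A 0 1; set c := A 1 0; set d := A 1 1.
set x := v 0 0; set y := v 1 0.
set y0 := a * x + b * y; set y1 := c * x + d * y.
have -> : (a * d - b * c) ^+ 2 * (x ^+ 2 + y ^+ 2) =
  (d * y0 - b * y1) ^+ 2 + (- c * y0 + a * y1) ^+ 2 by rewrite /y0 /y1; ring.
have -> : (a ^+ 2 + b ^+ 2 + c ^+ 2 + d ^+ 2) * (y0 ^+ 2 + y1 ^+ 2) =
  (d * y0 - b * y1) ^+ 2 + (- c * y0 + a * y1) ^+ 2
  + ((d * y1 + b * y0) ^+ 2 + (c * y1 + a * y0) ^+ 2) by ring.
by rewrite lerDl addr_ge0 // sqr_ge0.
Qed.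

Lemma sqnorm_trmx v : sqnorm v = (v^T *m v) 0 0.
Proof. by rewrite mxE sum_ord2 !mxE /sqnorm !expr2. Qed.

Lemma sqnorm_orthogonal N v : orthogonal2 N -> sqnorm (N *m v) = sqnorm v.
Proof.
by move=> hN; rewrite !sqnorm_trmx trmx_mul mulmxA -(mulmxA _ N^T) hN mulmx1.
Qed.

Lemma ball_of_sqnorm x y e : 0 < e -> sqnorm (y - x) < e ^+ 2 -> ball x e y.
Proof.
move=> e0 hq; split => // i j; rewrite [j]ord1 /ball /= distrC.
have hi : (y - x) i 0 ^+ 2 < e ^+ 2.
  apply: le_lt_trans hq; have := sqr_ge0 ((y - x) 0 0); have := sqr_ge0 ((y - x) 1 0).
  by rewrite /sqnorm; case: (ord2P i) => ->; lra.
move: hi; rewrite !mxE -(ltr_pXn2r (n := 2)) ?nnegrE ?normr_ge0 ?ltW //.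
by rewrite real_normK ?num_real.
Qed.

Lemma euclE v : eucl v = Num.sqrt (sqnorm v). Proof. by []. Qed.

Lemma eucl_ge0 v : 0 <= eucl v. Proof. exact: sqrtr_ge0. Qed.

Lemma eucl_gt0 v : v != 0 -> 0 < eucl v.
Proof. by move=> hv; rewrite euclE sqrtr_gt0 sqnorm_gt0. Qed.

Lemma sqr_eucl v : eucl v ^+ 2 = sqnorm v.
Proof. by rewrite sqr_sqrtr // sqnorm_ge0. Qed.

Lemma sqnorm_eucl1 v : eucl v = 1 -> sqnorm v = 1.
Proof. by rewrite -sqr_eucl => ->; rewrite expr1n. Qed.

Lemma sqnorm_normalize v : v != 0 -> sqnorm ((eucl v)^-1 *: v) = 1.
Proof. by move=> hv; rewrite sqnormZ -sqr_eucl exprVn mulVf // expf_neq0 // gt_eqF // eucl_gt0. Qed.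

Lemma eucl_normalize v : v != 0 -> eucl ((eucl v)^-1 *: v) = 1.
Proof. by move=> hv; rewrite euclE sqnorm_normalize ?sqrtr1. Qed.

Lemma eucl_dir t : eucl (dir t) = 1.
Proof. by rewrite euclE sqnorm_dir sqrtr1. Qed.

(** * Operator norm and norming vectors *)

Lemma opnorm_has_sup A :
  has_sup [set eucl (A *m v) | v in [set v : V | eucl v = 1]].
Proof.
split; first by exists (eucl (A *m dir 0)), (dir 0) => //; exact: eucl_dir.
exists (Num.sqrt (frob2 A)) => _ [v /sqnorm_eucl1 hv <-].
by rewrite euclE ler_sqrt ?frob2_ge0 // -[frob2 A]mulr1 -hv sqnorm_mulmx_le.
Qed.

Lemma opnorm_ub A v : eucl v = 1 -> eucl (A *m v) <= opnorm A.
Proof. by move=> hv; apply: (sup_upper_bound (opnorm_has_sup A)); exists v. Qed.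

Lemma opnorm_le A c : (forall v, eucl v = 1 -> eucl (A *m v) <= c) -> opnorm A <= c.
Proof.
move=> h; apply: ge_sup; first by case: (opnorm_has_sup A).
by move=> _ [v hv <-]; apply: h.
Qed.

Lemma opnorm_ge0 A : 0 <= opnorm A.
Proof. by apply: le_trans (opnorm_ub A (eucl_dir 0)); exact: eucl_ge0. Qed.

Definition norming (d : R) (A : M2) (v : V) : Prop :=
  forall u, d * sqnorm (A *m u) * sqnorm v <= sqnorm (A *m v) * sqnorm u.

Lemma norming_le d d' A v : 0 <= d' <= d -> norming d A v -> norming d' A v.
Proof.
move=> /andP [d'0 d'd] h u; apply: le_trans (h u).
by rewrite ler_wpM2r ?sqnorm_ge0 // ler_wpM2r ?sqnorm_ge0.
Qed.

Lemma norming_mulmx (d1 d2 : R) A B v : 0 <= d1 -> A *m v != 0 ->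
  norming d1 A v -> norming d2 B (A *m v) -> norming (d1 * d2) (B *m A) v.
Proof.
move=> d10 Av0 hA hB u; rewrite -!mulmxA.
have qAv : 0 < sqnorm (A *m v) by rewrite sqnorm_gt0.
rewrite -(ler_pM2r qAv).
have d1v : 0 <= d1 * sqnorm v by rewrite mulr_ge0 ?sqnorm_ge0.
have h1 := ler_wpM2l d1v (hB (A *m u)).
have h2 := ler_wpM2l (sqnorm_ge0 (B *m (A *m v))) (hA u).
nra.
Qed.

Lemma opnorm_norming d A v : 0 < d -> v != 0 -> norming d A v ->
  Num.sqrt d * opnorm A * eucl v <= eucl (A *m v).
Proof.
move=> d_gt0 v_neq0 h; have ev := eucl_gt0 v_neq0.
have sd : 0 < Num.sqrt d by rewrite sqrtr_gt0.
rewrite mulrAC mulrC -ler_pdivlMr ?mulr_gt0 //; apply: opnorm_le => u /sqnorm_eucl1 hu.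
rewrite ler_pdivlMr ?mulr_gt0 // !euclE -(sqrtrM _ (ltW d_gt0)) -sqrtrM ?sqnorm_ge0 //.
rewrite ler_sqrt; last exact: sqnorm_ge0.
by have := h u; rewrite hu mulr1 mulrCA mulrA.
Qed.

Lemma continuous_mulmx_dir : continuous (fun q : M2 * R => q.1 *m dir q.2).
Proof.
apply: continuous_mx_entries => i j q; rewrite [j]ord1.
have -> : (fun q : M2 * R => (q.1 *m dir q.2) i 0) =
          (fun q => q.1 i 0 * cos q.2 + q.1 i 1 * sin q.2).
  by apply: funext => r; rewrite mulmx2E !mxE.
have entry l : {for q, continuous (fun q : M2 * R => q.1 i l)}.
  by apply: (@continuous_comp _ _ _ fst (fun A : M2 => A i l));
    [exact: cvg_fst | exact: coord_continuous].
have ccos : {for q, continuous (fun q : M2 * R => cos q.2)}.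
  by apply: (@continuous_comp _ _ _ snd cos); [exact: cvg_snd | exact: continuous_cos].
have csin : {for q, continuous (fun q : M2 * R => sin q.2)}.
  by apply: (@continuous_comp _ _ _ snd sin); [exact: cvg_snd | exact: continuous_sin].
exact: (continuousD (continuousM (entry 0) ccos) (continuousM (entry 1) csin)).
Qed.

Lemma continuous_sqr_cross_dir p : continuous (fun t : R => cross (dir t) p ^+ 2).
Proof.
move=> t; have -> : (fun t : R => cross (dir t) p ^+ 2) =
   (fun t => (cos t * p 1 0 - sin t * p 0 0) * (cos t * p 1 0 - sin t * p 0 0)).
  by apply: funext => r; rewrite /cross !mxE expr2.
have g := continuousD (continuousM (@continuous_cos R t) (@cst_continuous R R (p 1 0) t))
                      (continuousN (continuousM (@continuous_sin R t) (@cst_continuous R R (p 0 0) t))).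
exact: (continuousM g g).
Qed.

Lemma continuous_frob2 : continuous frob2.
Proof.
move=> A; have c i j : {for A, continuous (fun B : M2 => B i j ^+ 2)}.
  by apply: (@continuous_comp _ _ _ (fun B : M2 => B i j) (fun r : R => r ^+ 2));
    [exact: coord_continuous | exact: exprn_continuous].
exact: (continuousD (continuousD (continuousD (c 0 0) (c 0 1)) (c 1 0)) (c 1 1)).
Qed.

Lemma continuous_sqr_det : continuous (fun A : M2 => \det A ^+ 2).
Proof.
move=> A; apply: (@continuous_comp _ _ _ (fun B : M2 => \det B) (fun r : R => r ^+ 2));
  last exact: exprn_continuous.
have -> : (fun B : M2 => \det B) = (fun B => B 0 0 * B 1 1 - B 0 1 * B 1 0).
  by apply: funext => B; rewrite det_mx2.
have c i j : {for A, continuous (fun B : M2 => B i j)} by exact: coord_continuous.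
exact: (continuousD (continuousM (c 0 0) (c 1 1)) (continuousN (continuousM (c 0 1) (c 1 0)))).
Qed.

Lemma compact_unitmx_bounds (K : set M2) :
  K !=set0 -> compact K -> (forall A, K A -> A \in unitmx) ->
  exists Phi d0, [/\ 1 <= Phi, 0 < d0 <= 1 &
    forall A, K A -> frob2 A <= Phi /\ d0 <= \det A ^+ 2].
Proof.
move=> K0 cK Kunit.
have [Am Km hmax] := compact_EVT_max K0 cK (continuous_subspaceT continuous_frob2).
have [An Kn hmin] := compact_EVT_min K0 cK (continuous_subspaceT continuous_sqr_det).
have det_gt0 : 0 < \det An ^+ 2.
  by rewrite exprn_even_gt0 //= -unitfE -unitmxE Kunit // -inE.
exists (Num.max 1 (frob2 Am)), (Num.min 1 (\det An ^+ 2)); split.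
- by rewrite le_max lexx.
- by rewrite lt_min ltr01 det_gt0 ge_min lexx.
by move=> A KA; rewrite le_max ge_min !(hmax, hmin) ?orbT // inE.
Qed.

(** * Vectors deep inside a cone that avoids a direction *)

Definition perp (p : V) : V := \col_i (if i == 0 then - p 1 0 else p 0 0).

Lemma cross_perp a p : cross a (perp p) = dot a p.
Proof. by rewrite /cross /dot /perp !mxE /=; ring. Qed.

Lemma sqnormZ_decomp u p : sqnorm u *: p = dot u p *: u + cross u p *: perp u.
Proof. by apply: col2P; rewrite !mxE /= /sqnorm /dot /cross; ring. Qed.

Lemma sqnorm_tilt p s : sqnorm (p + s *: perp p) = (1 + s ^+ 2) * sqnorm p.
Proof. by rewrite /sqnorm /perp !mxE /=; ring. Qed.

Lemma cross_tilt a p s : cross a (p + s *: perp p) = cross a p + s * dot a p.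
Proof. by rewrite -cross_perp /cross /perp !mxE /=; ring. Qed.

Lemma crossDZ a b z t : cross (a + t *: b) z = cross a z + t * cross b z.
Proof. by rewrite /cross !mxE; ring. Qed.

(* For a unit vector [p]: every direction of [C] makes with [p] an angle whose
   squared sine is at least [rho]. *)
Definition cone_away (rho : R) (p : V) (C : set V) : Prop :=
  forall x, C x -> rho * sqnorm x <= cross x p ^+ 2.

Definition rel_ball (w : V) (eta : R) : set V :=
  [set x | sqnorm (x - w) <= eta ^+ 2 * sqnorm w].

(* Tilting [p] by an angle of about [rho / 2], to whichever side keeps [z] away
   from the direction of [b], gives a direction [z] still avoided by every cone
   that is [rho]-away from [p]. *)
Lemma tilt_away p b rho : sqnorm p = 1 -> 0 < rho <= 1 ->
  exists z, [/\ sqnorm z <= 2, rho ^+ 2 / 4 * sqnorm b <= cross b z ^+ 2 &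
    forall y, rho * sqnorm y <= cross y p ^+ 2 -> cross y z = 0 -> y = 0].
Proof.
move=> p1 /andP [rho0 rho1].
set s := if 0 <= cross b p * dot b p then rho / 2 else - (rho / 2).
have s2 : s ^+ 2 = rho ^+ 2 / 4 by rewrite /s; case: ifP => _; rewrite ?sqrrN; field.
have lagrange v : sqnorm v = cross v p ^+ 2 + dot v p ^+ 2.
  by rewrite -sqnorm_mul_cross_dot p1 mulr1.
exists (p + s *: perp p); split.
- by rewrite sqnorm_tilt p1 mulr1 s2; nra.
- have hs : 0 <= s * (cross b p * dot b p) by rewrite /s; case: ifP => h; nra.
  have s1 : 0 <= (1 - s ^+ 2) * cross b p ^+ 2.
    by rewrite mulr_ge0 ?sqr_ge0 // subr_ge0 s2; nra.
  rewrite cross_tilt lagrange -s2; nra.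
move=> y hy; rewrite cross_tilt => /eqP; rewrite addr_eq0 => /eqP cy.
rewrite lagrange cy sqrrN exprMn s2 in hy.
have hd := sqr_ge0 (dot y p); have hr : 0 < rho - rho ^+ 2 / 4 by nra.
apply/eqP; rewrite -sqnorm_eq0 lagrange cy sqrrN exprMn s2.
suff -> : dot y p ^+ 2 = 0 by rewrite mulr0 add0r.
apply/eqP; rewrite eq_le hd andbT -(pmulr_lle0 _ hr); nra.
Qed.

(* If [w] were far from norming for [Y], a small perturbation of [w] inside the
   relative ball would be sent by [Y] onto the tilted line [R z], which [C] avoids. *)
Lemma norming_rel_ball (C : set V) p rho eta Y w :
  (forall x, C x -> x != 0) -> sqnorm p = 1 -> 0 < rho <= 1 -> cone_away rho p C ->
  (forall x, C x -> C (Y *m x)) -> rel_ball w eta `<=` C ->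
  norming (eta ^+ 2 * rho ^+ 2 / 8) Y w.
Proof.
move=> C0 p1 rho01 away YC ballC u.
set a := Y *m w; set b := Y *m u.
have qa := sqnorm_ge0 a; have qu := sqnorm_ge0 u; have qw := sqnorm_ge0 w.
have [->|b0] := eqVneq b 0.
  by rewrite sqnorm0 mulr0 mul0r mulr_ge0.
have qb : 0 < sqnorm b by rewrite sqnorm_gt0.
have [z [z2 bz zC]] := tilt_away b p1 rho01.
have bz0 : cross b z != 0.
  apply: contraTneq bz => ->; rewrite expr0n /= -ltNge mulr_gt0 // divr_gt0 //.
  by rewrite exprn_gt0 //; case/andP: rho01.
set tau := - cross a z / cross b z.
have Yx : cross (Y *m (w + tau *: u)) z = 0.
  by rewrite mulmxDr -scalemxAr crossDZ /tau divfK // addrN.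
have out : sqnorm (tau *: u) > eta ^+ 2 * sqnorm w.
  rewrite ltNge; apply: contraPN Yx => hin.
  have Cx : C (w + tau *: u) by apply: ballC; rewrite /rel_ball /= addrC addKr.
  have Cy := YC _ Cx.
  by move/(zC _ (away _ Cy))/eqP; rewrite (negbTE (C0 _ Cy)).
have ha : cross a z ^+ 2 <= 2 * sqnorm a.
  by apply: le_trans (cross_sqr_le a z) _; rewrite mulrC ler_wpM2r.
have htau : tau ^+ 2 * cross b z ^+ 2 = cross a z ^+ 2.
  by rewrite /tau -exprMn divfK // sqrrN.
rewrite sqnormZ in out.
have hc := sqr_ge0 (cross b z); have he := sqr_ge0 eta.
have h1 := ler_wpM2r hc (ltW out).
have h2 := ler_wpM2r (mulr_ge0 he qw) bz.
have h3 := ler_wpM2l qu ha.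
have h4 : tau ^+ 2 * sqnorm u * cross b z ^+ 2 = sqnorm u * cross a z ^+ 2.
  by rewrite -htau; ring.
lra.
Qed.

(** * Multicones *)

Lemma proj_intervalZ (a b : R) x mu :
  proj_interval a b x -> mu != 0 -> proj_interval a b (mu *: x).
Proof.
move=> [t [s [tab [s0 ->]]]] mu0; exists t, (mu * s).
by rewrite mulf_neq0 // scalerA.
Qed.

Lemma proj_interval_neq0 (a b : R) x : proj_interval a b x -> x != 0.
Proof.
move=> [t [s [_ [s0 ->]]]]; rewrite -sqnorm_gt0 sqnormZ sqnorm_dir mulr1.
by rewrite exprn_even_gt0.
Qed.

Lemma proj_interval_dir (a b : R) t : a <= t <= b -> proj_interval a b (dir t).
Proof. by move=> tab; exists t, 1; rewrite oner_neq0 scale1r. Qed.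

Lemma cross_eq0_parallel u p : sqnorm u = 1 -> cross u p = 0 -> p = dot u p *: u.
Proof. by move=> u1 up; have := sqnormZ_decomp u p; rewrite u1 scale1r up scale0r addr0. Qed.

Lemma proj_interval_away (a b : R) p : a <= b -> p != 0 -> ~ proj_interval a b p ->
  \forall r \near 0^'+, forall x, proj_interval a b x -> r * sqnorm x <= cross x p ^+ 2.
Proof.
move=> ab p0 pI.
have [c ctab cmin] := EVT_min ab (continuous_subspaceT (@continuous_sqr_cross_dir p)).
have cpos : 0 < cross (dir c) p ^+ 2.
  rewrite exprn_even_gt0 //=; apply/eqP => cp0; apply: pI.
  have pE := cross_eq0_parallel (sqnorm_dir c) cp0.
  rewrite pE; apply: proj_intervalZ; first by apply: proj_interval_dir; move: ctab; rewrite in_itv.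
  by apply: contra_neq p0 => d0; rewrite pE d0 scale0r.
apply: filterS (nbhs_right_le cpos) => r hr x [t [s [tab [_ ->]]]].
have -> : cross (s *: dir t) p = s * cross (dir t) p by rewrite /cross !mxE; ring.
rewrite sqnormZ sqnorm_dir mulr1 exprMn mulrC ler_wpM2l ?sqr_ge0 //.
by apply: le_trans hr (cmin t _); rewrite in_itv.
Qed.

Section Multicone.
Variables (C : set V) (Is : seq (set V)).
Hypothesis Is_intervals : forall I, I \in Is -> is_closed_proj_interval I.
Hypothesis C_bigcup : C = \bigcup_(I in [set I | I \in Is]) I.

Lemma multiconeP x : C x <-> exists2 I, I \in Is & I x.
Proof. by rewrite C_bigcup; split => -[I hI hx]; exists I. Qed.

Lemma multicone_neq0 x : C x -> x != 0.
Proof.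
by case/multiconeP => I /Is_intervals [a [b [_ [_ ->]]]]; exact: proj_interval_neq0.
Qed.

Lemma multiconeZ x mu : C x -> mu != 0 -> C (mu *: x).
Proof.
case/multiconeP => I hI hx mu0; apply/multiconeP; exists I => //.
by move: hx; have [a [b [_ [_ ->]]]] := Is_intervals hI; move/proj_intervalZ; apply.
Qed.

Lemma near_multicone (P : R -> V -> Prop) :
  (forall a b : R, a <= b -> proj_interval a b `<=` C ->
    \forall r \near 0^'+, forall x, proj_interval a b x -> P r x) ->
  \forall r \near 0^'+, forall x, C x -> P r x.
Proof.
move=> hP; have : \forall r \near 0^'+, forall I, I \in Is -> forall x, I x -> P r x.
  apply: filter_forall_seq => I hI; have [a [b [ab [_ IE]]]] := Is_intervals hI.
  by rewrite IE; apply: (hP a b ab); rewrite -IE => x hx; apply/multiconeP; exists I.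
by apply: filterS => r hr x /multiconeP [I hI]; exact: hr.
Qed.

Lemma multicone_away : C <> @RP1 R ->
  exists p rho, [/\ sqnorm p = 1, 0 < rho <= 1 & cone_away rho p C].
Proof.
move=> CnRP.
have [p [p0 pC]] : exists p : V, p != 0 /\ ~ C p.
  apply: contrapT => hno; apply: CnRP; apply/seteqP; split => x; first exact: multicone_neq0.
  by rewrite /RP1 /= => x0; apply: contrapT => xC; apply: hno; exists x.
set q := (eucl p)^-1 *: p.
have q1 : sqnorm q = 1 by exact: sqnorm_normalize.
have qC : ~ C q.
  move=> /multiconeZ /(_ (lt0r_neq0 (eucl_gt0 p0))); rewrite scalerA mulfV ?scale1r //.
  exact: lt0r_neq0 (eucl_gt0 p0).
have q0 : q != 0 by rewrite -sqnorm_gt0 q1.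
have [rho rho01 away] := near0_pos_le1 (near_multicone
  (fun (a b : R) ab IC => proj_interval_away ab q0 (fun qI => qC (IC _ qI)))).
by exists q, rho.
Qed.

Section Margin.
Variables (Ah : set M2) (Phi : R).
Hypotheses (Ah_compact : compact Ah) (C_inv : strongly_invariant C Ah).
Hypotheses (Phi_ge1 : 1 <= Phi) (Ah_frob2 : forall H, Ah H -> frob2 H <= Phi).

Lemma proj_interval_margin (a b : R) : a <= b -> proj_interval a b `<=` C ->
  \forall eta \near 0^'+, forall x, proj_interval a b x ->
    forall H, Ah H -> rel_ball (H *m x) eta `<=` C.
Proof.
move=> ab IC.
set K := (fun q : M2 * R => q.1 *m dir q.2) @` (Ah `*` `[a, b]).
have cK : compact K.
  apply: continuous_compact; first exact: continuous_subspaceT continuous_mulmx_dir.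
  exact: compact_setX Ah_compact (@segment_compact R a b).
have KC : K `<=` interior C.
  move=> _ [[H t] [/= AhH tab] <-]; apply: (C_inv AhH); exists (dir t) => //.
  by apply: IC; apply: proj_interval_dir; move: tab; rewrite /= in_itv.
have [e /andP [e0 _] he] := near0_pos_le1 (compact_ball_margin cK KC).
have Phi0 : 0 < Phi by apply: lt_le_trans ltr01 Phi_ge1.
near=> eta.
have [eta0 etaPhi] : 0 < eta /\ eta * Phi < e.
  split; near: eta; first exact: nbhs_right_gt.
  by apply: filterS (nbhs_right_lt (divr_gt0 e0 Phi0)) => eta; rewrite ltr_pdivlMr.
move=> _ [t [s [tab [s0 ->]]]] H AhH y.
rewrite /rel_ball /= -scalemxAr -[y](scalerKV s0) -scalerBr !sqnormZ mulrCA.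
rewrite ler_pM2l ?exprn_even_gt0 // => hy.
apply: multiconeZ s0; apply: (he (H *m dir t)); first by exists (H, t).
apply: (ball_of_sqnorm e0); apply: le_lt_trans hy _.
have HPhi : sqnorm (H *m dir t) <= Phi.
  by rewrite -[Phi]mulr1 -(sqnorm_dir t); apply: le_trans (sqnorm_mulmx_le _ _) _;
    rewrite ler_wpM2r ?sqnorm_ge0 ?Ah_frob2.
have h1 := ler_wpM2l (sqr_ge0 eta) HPhi.
have h2 : eta ^+ 2 * Phi <= (eta * Phi) ^+ 2.
  by rewrite exprMn ler_wpM2l ?sqr_ge0 // expr2 ler_peMl // ltW.
have h3 : (eta * Phi) ^+ 2 < e ^+ 2.
  by have := mulr_gt0 eta0 Phi0; nra.
lra.
Unshelve. all: by end_near. Qed.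

Lemma multicone_margin :
  exists2 eta, 0 < eta <= 1 & forall H k, Ah H -> C k -> rel_ball (H *m k) eta `<=` C.
Proof.
have [eta eta01 heta] := near0_pos_le1 (near_multicone proj_interval_margin).
by exists eta => // H k AhH /heta; apply.
Qed.

End Margin.
End Multicone.

(** * The semigroup generated by conformal and hyperbolic matrices *)

Lemma norming_bounded A v Phi (d0 : R) : 0 <= d0 -> 0 < Phi ->
  frob2 A <= Phi -> d0 <= \det A ^+ 2 -> norming (d0 / Phi ^+ 2) A v.
Proof.
move=> d00 Phi0 hF hd u.
have hu : sqnorm (A *m u) <= Phi * sqnorm u.
  exact: le_trans (sqnorm_mulmx_le A u) (ler_wpM2r (sqnorm_ge0 u) hF).
have hv : d0 * sqnorm v <= Phi * sqnorm (A *m v).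
  apply: le_trans (ler_wpM2r (sqnorm_ge0 v) hd) (le_trans (sqnorm_mulmx_ge A v) _).
  by apply: ler_wpM2r; first exact: sqnorm_ge0.
have -> : d0 / Phi ^+ 2 * sqnorm (A *m u) * sqnorm v =
          sqnorm (A *m u) * (d0 * sqnorm v) / Phi ^+ 2 by rewrite mulrAC; ring.
rewrite ler_pdivrMr ?exprn_gt0 //.
have -> : sqnorm (A *m v) * sqnorm u * Phi ^+ 2 =
          Phi * sqnorm u * (Phi * sqnorm (A *m v)) by ring.
exact: ler_pM (sqnorm_ge0 _) (mulr_ge0 d00 (sqnorm_ge0 v)) hu hv.
Qed.

Lemma frob2_gt0 A : A \in unitmx -> 0 < frob2 A.
Proof.
move=> Au; have dA : 0 < \det A ^+ 2 by rewrite exprn_even_gt0 //= -unitfE -unitmxE.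
have := sqnorm_mulmx_ge A (dir 0); rewrite sqnorm_dir mulr1 lt_neqAle frob2_ge0 andbT.
by apply: contraTneq => <-; rewrite mul0r -ltNge.
Qed.

Definition conj_similarity (M E : M2) : Prop :=
  exists2 g, 0 <= g & forall w, sqnorm (M *m (E *m w)) = g * sqnorm (M *m w).

Lemma conj_similarity1 M : conj_similarity M 1%:M.
Proof. by exists 1 => // w; rewrite mul1mx mul1r. Qed.

Lemma conj_similarity_mul M E1 E2 :
  conj_similarity M E1 -> conj_similarity M E2 -> conj_similarity M (E1 *m E2).
Proof.
move=> [g1 g10 h1] [g2 g20 h2]; exists (g1 * g2); first exact: mulr_ge0.
by move=> w; rewrite -mulmxA h1 h2 mulrA.
Qed.

Lemma conformal_conj_similarity M A : M \in unitmx -> A \in unitmx ->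
  orthogonal2 ((Num.sqrt `|\det A|)^-1 *: (M *m A *m invmx M)) -> conj_similarity M A.
Proof.
move=> Mu Au hO; exists `|\det A| => // w.
have r0 : Num.sqrt `|\det A| != 0.
  by rewrite sqrtr_eq0 -ltNge normr_gt0 -unitfE -unitmxE.
have -> : M *m (A *m w) =
    Num.sqrt `|\det A| *: ((Num.sqrt `|\det A|)^-1 *: (M *m A *m invmx M)) *m (M *m w).
  by rewrite scalerA mulfV // scale1r !mulmxA mulmxKV.
by rewrite -scalemxAl sqnormZ (sqnorm_orthogonal _ hO) sqr_sqrtr.
Qed.

Lemma norming_conj_similarity M E v : M \in unitmx -> conj_similarity M E ->
  norming (\det M ^+ 4 / frob2 M ^+ 4) E v.
Proof.
move=> Mu [g g0 hg] u; set D := \det M ^+ 2; set F := frob2 M.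
have D0 : 0 < D by rewrite exprn_even_gt0 //= -unitfE -unitmxE.
have F0 : 0 < F by exact: frob2_gt0.
have -> : \det M ^+ 4 / F ^+ 4 * sqnorm (E *m u) * sqnorm v =
    D * sqnorm (E *m u) * (D * sqnorm v) / F ^+ 4 by rewrite /D; ring.
rewrite ler_pdivrMr ?exprn_gt0 //.
have a1 := sqnorm_mulmx_ge M (E *m u); have a2 := sqnorm_mulmx_le M u.
have b1 := sqnorm_mulmx_ge M v; have b2 := sqnorm_mulmx_le M (E *m v).
rewrite hg -/D -/F in a1; rewrite hg -/F in b2; rewrite -/D -/F in a2 b1.
have h1 := le_trans a1 (ler_wpM2l (ltW F0) (ler_wpM2l g0 a2)).
have h2 := ler_pM (mulr_ge0 (ltW D0) (sqnorm_ge0 _)) (mulr_ge0 (ltW D0) (sqnorm_ge0 _)) h1 b1.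
have h3 := ler_wpM2l (mulr_ge0 (exprn_ge0 3 (ltW F0)) (sqnorm_ge0 u)) b2.
have -> : sqnorm (E *m v) * sqnorm u * F ^+ 4 = F ^+ 3 * sqnorm u * (F * sqnorm (E *m v)).
  by ring.
have e1 : F * (g * (F * sqnorm u)) * (F * sqnorm (M *m v)) =
          F ^+ 3 * sqnorm u * (g * sqnorm (M *m v)) by ring.
by rewrite e1 in h2; exact: le_trans h2 h3.
Qed.

Definition gen_monoid (S : set M2) : set M2 := [set E | E = 1%:M \/ gen_semigroup S E].

Lemma gen_monoid_ind (S : set M2) (P : M2 -> Prop) :
  P 1%:M -> (forall A, S A -> P A) -> (forall A B, P A -> P B -> P (A *m B)) ->
  forall E, gen_monoid S E -> P E.
Proof.
move=> P1 PS PM E [->|] //; elim=> [A /PS|A B _ PA _ PB] //; exact: PM.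
Qed.

Lemma gen_monoid_mul (S : set M2) A B :
  gen_monoid S A -> gen_monoid S B -> gen_monoid S (A *m B).
Proof.
move=> [->|hA] [->|hB]; rewrite ?mul1mx ?mulmx1; [by left|by right|by right|].
by right; apply: gen_mul.
Qed.

Lemma gen_semigroupU_decomp (Ae Ah : set M2) X : gen_semigroup (Ae `|` Ah) X ->
  gen_monoid Ae X \/ exists P H E,
    [/\ gen_monoid (Ae `|` Ah) P, Ah H, gen_monoid Ae E & X = P *m H *m E].
Proof.
elim=> [A [AeA|AhA] | A B hA IHA hB IHB].
- by left; right; apply: gen_base.
- by right; exists 1%:M, A, 1%:M; rewrite mul1mx mulmx1; split => //; left.
case: IHB => [EB|[P [H [E [hP AhH hE ->]]]]].
  case: IHA => [EA|[P [H [E [hP AhH hE ->]]]]]; first by left; exact: gen_monoid_mul.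
  right; exists P, H, (E *m B); split => //; first exact: gen_monoid_mul.
  by rewrite !mulmxA.
right; exists (A *m P), H, E; split => //; last by rewrite !mulmxA.
by apply: gen_monoid_mul => //; right.
Qed.

Section Semigroup.
Variables (Ae Ah : set M2) (C : set V).
Hypothesis C_neq0 : forall x, C x -> x != 0.
Hypothesis Ae_stable : forall A, Ae A -> forall x, C x -> C (A *m x).
Hypothesis Ah_stable : forall H, Ah H -> forall x, C x -> C (H *m x).

Lemma gen_monoid_stable S : (forall A, S A -> forall x, C x -> C (A *m x)) ->
  forall E, gen_monoid S E -> forall x, C x -> C (E *m x).
Proof.
move=> SC; apply: gen_monoid_ind => [x|//|A B AC BC x Cx]; first by rewrite mul1mx.
by rewrite -mulmxA; apply/AC/BC.
Qed.

Lemma setU_stable A : (Ae `|` Ah) A -> forall x, C x -> C (A *m x).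
Proof. by case=> [/Ae_stable|/Ah_stable]. Qed.

Lemma gen_semigroupU_stable X : gen_semigroup (Ae `|` Ah) X ->
  forall x, C x -> C (X *m x).
Proof. by move=> hX; apply: (gen_monoid_stable (@setU_stable)); right. Qed.

Lemma gen_semigroupU_norming (cE cH cP : R) :
  0 <= cE -> 0 <= cH <= 1 -> 0 <= cP <= 1 ->
  (forall E v, gen_monoid Ae E -> norming cE E v) ->
  (forall H v, Ah H -> norming cH H v) ->
  (forall Y H k, (forall x, C x -> C (Y *m x)) -> Ah H -> C k -> norming cP Y (H *m k)) ->
  forall X v, gen_semigroup (Ae `|` Ah) X -> C v -> norming (cE * cH * cP) X v.
Proof.
move=> cE0 /andP [cH0 cH1] /andP [cP0 cP1] hE hH hP X v hX Cv.
case: (gen_semigroupU_decomp hX) => [EX|[P [H [E [hPm AhH hEm ->]]]]].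
  apply: norming_le (hE _ _ EX); rewrite !mulr_ge0 //=.
  by rewrite -[leRHS]mulr1 -mulrA ler_wpM2l // mulr_ile1.
have CEv := gen_monoid_stable Ae_stable hEm Cv.
rewrite -mulmxA; apply: norming_mulmx; rewrite ?mulr_ge0 //.
- by rewrite -mulmxA; apply/C_neq0/Ah_stable.
- exact: norming_mulmx cE0 (C_neq0 CEv) (hE _ _ hEm) (hH _ _ AhH).
rewrite -mulmxA; apply: hP => //.
exact: (gen_monoid_stable (@setU_stable) hPm).
Qed.

Lemma gen_semigroupU_uniformly_norming M p rho eta Phi (d0 : R) :
  M \in unitmx -> (forall A, Ae A -> conj_similarity M A) ->
  1 <= Phi -> 0 < d0 <= 1 -> (forall H, Ah H -> frob2 H <= Phi /\ d0 <= \det H ^+ 2) ->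
  sqnorm p = 1 -> 0 < rho <= 1 -> cone_away rho p C ->
  0 < eta <= 1 -> (forall H k, Ah H -> C k -> rel_ball (H *m k) eta `<=` C) ->
  exists2 d, 0 < d & forall X v, gen_semigroup (Ae `|` Ah) X -> C v -> norming d X v.
Proof.
move=> Mu AeM Phi1 /andP [d0_gt0 d0_le1] hb p1 rho01 away /andP [eta0 eta1] margin.
have Phi0 : 0 < Phi by apply: lt_le_trans ltr01 Phi1.
have /andP [rho0 rho1] := rho01.
have cE0 : 0 < \det M ^+ 4 / frob2 M ^+ 4.
  by apply: divr_gt0; [rewrite exprn_even_gt0 //= -unitfE -unitmxE | exact/exprn_gt0/frob2_gt0].
have cH0 : 0 < d0 / Phi ^+ 2 by rewrite divr_gt0 ?exprn_gt0.
have cP0 : 0 < eta ^+ 2 * rho ^+ 2 / 8 by rewrite !mulr_gt0 ?exprn_gt0.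
exists (\det M ^+ 4 / frob2 M ^+ 4 * (d0 / Phi ^+ 2) * (eta ^+ 2 * rho ^+ 2 / 8)).
  exact: mulr_gt0 (mulr_gt0 cE0 cH0) cP0.
apply: gen_semigroupU_norming.
- exact: ltW.
- by rewrite ltW //= ler_pdivrMr ?exprn_gt0 // mul1r; nra.
- rewrite ltW //= ler_pdivrMr // mul1r; suff : eta ^+ 2 * rho ^+ 2 <= 1 by lra.
  by apply: mulr_ile1; rewrite ?sqr_ge0 // exprn_ile1 // ltW.
- move=> E v /(gen_monoid_ind (conj_similarity1 M) AeM (conj_similarity_mul (M := M))).
  exact: norming_conj_similarity Mu.
- by move=> H v /hb [hF hd]; exact: norming_bounded (ltW d0_gt0) Phi0 hF hd.
by move=> Y H k YC AhH Ck; exact: norming_rel_ball C_neq0 p1 rho01 away YC (margin H k AhH Ck).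
Qed.

End Semigroup.

Lemma almost_multiplicative_of_norming (S : set M2) (C : set V) d (v0 : V) :
  0 < d -> C v0 -> eucl v0 = 1 -> (forall x, C x -> x != 0) ->
  (forall X x, S X -> C x -> C (X *m x)) ->
  (forall X x, S X -> C x -> norming d X x) -> almost_multiplicative S.
Proof.
move=> d_gt0 Cv0 v01 C0 SC Sd; exists d; split => // X Y SX SY.
have hY := opnorm_norming d_gt0 (C0 _ Cv0) (Sd _ _ SY Cv0); rewrite v01 mulr1 in hY.
have CYv0 := SC _ _ SY Cv0.
have hX := opnorm_norming d_gt0 (C0 _ CYv0) (Sd _ _ SX CYv0).
have sd := sqrtr_ge0 d; have nX := opnorm_ge0 X; have nY := opnorm_ge0 Y.
apply: le_trans (opnorm_ub (X *m Y) v01); rewrite -mulmxA.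
apply: le_trans hX.
have <- : Num.sqrt d * opnorm X * (Num.sqrt d * opnorm Y) = d * opnorm X * opnorm Y.
  by rewrite mulrACA -expr2 sqr_sqrtr ?mulrA // ltW.
by apply: ler_wpM2l => //; exact: mulr_ge0.
Qed.

End Plane.

Theorem proposition2p3 (R : realType) (Ae Ah : set 'M[R]_2) :
  (forall A, Ae A -> inGL2 A) ->
  (forall A, Ah A -> inGL2 A) ->
  Ah !=set0 ->
  compact Ah ->
  forall C : set 'cV[R]_2,
  multicone C ->
  strongly_invariant C Ah ->
  strongly_conformal Ae ->
  (forall A, Ae A -> image_mx A C = C) ->
  almost_multiplicative (gen_semigroup (Ae `|` Ah)).
Proof.
move=> AeU AhU Ah0 cAh C [[Is [IsI CE]] [[c Cc] CnRP]] hsi [M [Mu Mconf]] AeC_eq.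
have C0 := multicone_neq0 IsI CE.
have AeC A : Ae A -> forall x, C x -> C (A *m x).
  by move=> AeA x Cx; rewrite -(AeC_eq A AeA); exists x.
have AhC H : Ah H -> forall x, C x -> C (H *m x).
  by move=> AhH x Cx; apply: interior_subset; apply: (hsi H AhH); exists x.
have AeM A : Ae A -> conj_similarity M A.
  by move=> AeA; exact: conformal_conj_similarity Mu (AeU A AeA) (Mconf A AeA).
have [p [rho [p1 rho01 away]]] := multicone_away IsI CE CnRP.
have [Phi [d0 [Phi1 d0_01 hb]]] := compact_unitmx_bounds Ah0 cAh AhU.
have [eta eta01 margin] := multicone_margin IsI CE cAh hsi Phi1 (fun H h => (hb H h).1).
have [d d_gt0 hd] := gen_semigroupU_uniformly_norming C0 AeC AhC Mu AeM Phi1 d0_01 hb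
  p1 rho01 away eta01 margin.
apply: (almost_multiplicative_of_norming d_gt0 _ (eucl_normalize (C0 c Cc)) C0 _ hd).
  by apply: (multiconeZ IsI CE Cc); rewrite invr_neq0 // gt_eqF // eucl_gt0 // C0.
by move=> X x SX Cx; exact: (gen_semigroupU_stable AeC AhC SX Cx).
Qed.
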